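(* Let $E\subseteq D$ be a subspace of the Fischer space $\Pi(D)$, i.e., $d^e\in E$ for all $d,e\in E$. Then the algebra $\mathcal{A}(D)/\mathcal{V}(D)$ contains a subalgebra that has a quotient isomorphic to $\mathcal{A}(E)/\mathcal{V}(E)$.
   Context: Let $G$ be a group generated by a conjugacy class $D$ of involutions such that for all $d,e\in D$ the order of $de$ is $1$, $2$ or $3$. The Fischer space $\Pi(D)$ has point set $D$ and lines the triples $\{d,e,d^e\}$ with $d,e\in D$ non-commuting. $\mathcal{A}(D)$ is the $\mathbb{F}_2$-vector space with basis $D$ (finite subsets under symmetric difference), with bilinear product determined by $d*e=d+e+f$ if $\{d,e,f\}$ is a line and $d*e=0$ otherwise. The bilinear form is determined by $\langle d,e\rangle=1$ if $d,e$ do not commute and $0$ otherwise, and $\mathcal{V}(D)$ is its radical. For the subspace $E$, $\mathcal{A}(E)$ is the subalgebra of $\mathcal{A}(D)$ spanned by $E$ (the same construction applied to $E$ and the lines contained in $E$), and $\mathcal{V}(E)$ is the radical of the restriction of $\langle\cdot,\cdot\rangle$ to $\mathcal{A}(E)$. *)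

From HB Require Import structures.
From mathcomp Require Import all_boot.
From mathcomp Require Import finmap.

Set Implicit Arguments.
Unset Strict Implicit.
Unset Printing Implicit Defensive.

Local Open Scope fset_scope.

Section Fischer.
Variable G : groupType.
Local Open Scope group_scope.

Definition involution (x : G) : Prop := x != 1 /\ x * x = 1.

Definition is_conj_class (D : pred G) : Prop :=
  exists d0 : G, forall x : G, D x <-> exists g : G, x = d0 ^ g.

(* G is generated by D: every element of G is a finite product of
   elements of D (D is closed under inverses, as it consists of involutions;
   the empty product is 1). *)
Definition generates (D : pred G) : Prop :=
  forall g : G, exists s : seq G, all D s /\ g = foldr (fun a b => a * b) 1 s.

Definition order_le3 (x : G) : Prop :=
  x ^+ 1 = 1 \/ x ^+ 2 = 1 \/ x ^+ 3 = 1.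

Definition fischer_subspace (D E : pred G) : Prop :=
  {subset E <= D} /\ forall d e, E d -> E e -> E (d ^ e).

(* An element of A(S) (for S = D or S = E) is a finite subset x of S,
   viewed as the formal F_2-sum of its elements. *)
Definition supported (S : pred G) (x : {fset G}) : Prop := {subset x <= S}.

Definition addv (x y : {fset G}) : {fset G} := (x `\` y) `|` (y `\` x).

Definition commb (d e : G) : bool := d * e == e * d.

(* product of basis elements: d*e = d + e + d^e if {d,e,d^e} is a line
   (i.e. d, e do not commute), and 0 otherwise *)
Definition mul1 (d e : G) : {fset G} :=
  if commb d e then fset0 else addv (addv [fset d] [fset e]) [fset d ^ e].

Definition mulv (x y : {fset G}) : {fset G} :=
  \big[addv/fset0]_(d <- x) \big[addv/fset0]_(e <- y) mul1 d e.

Definition formv (x y : {fset G}) : bool :=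
  \big[addb/false]_(d <- x) \big[addb/false]_(e <- y) ~~ commb d e.

Definition radical (S : pred G) (x : {fset G}) : Prop :=
  supported S x /\ forall y, supported S y -> formv x y = false.

(* A subalgebra of A(D)/V(D) is given by its preimage B in A(D):
   a subspace of A(D) containing V(D) and closed under the product. *)
Definition subalg_mod_rad (D : pred G) (B : pred {fset G}) : Prop :=
  [/\ forall x, B x -> supported D x,
      forall x, radical D x -> B x,
      forall x y, B x -> B y -> B (addv x y)
    & forall x y, B x -> B y -> B (mulv x y)].

(* phi induces a surjective F_2-algebra homomorphism
   B/V(D) -> A(E)/V(E); by the first isomorphism theorem this is the
   same as B/V(D) having a quotient (by the kernel, an ideal)
   isomorphic to A(E)/V(E). *)
Definition surj_hom_mod_rad (D E : pred G) (B : pred {fset G})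
    (phi : {fset G} -> {fset G}) : Prop :=
  [/\ forall x, B x -> supported E (phi x),
      forall x y, B x -> B y ->
        radical E (addv (phi (addv x y)) (addv (phi x) (phi y))),
      forall x y, B x -> B y ->
        radical E (addv (phi (mulv x y)) (mulv (phi x) (phi y))),
      forall x, radical D x -> radical E (phi x)
    & forall z, supported E z -> exists2 x, B x & radical E (addv (phi x) z)].

Definition subalg_with_quotient_iso (D E : pred G) : Prop :=
  exists B : pred {fset G}, subalg_mod_rad D B /\
    exists phi : {fset G} -> {fset G}, surj_hom_mod_rad D E B phi.

End Fischer.

(* The subalgebra is B = A(E) + V(D).  Because the order of every product of
   two elements of D is at most 3, the form on A(D) is associative,
   <xy, z> = <x, yz>, so V(D) is an ideal of A(D) and B is closed under the
   product.  Sending x = a + v (a in A(E), v in V(D)) to a is well defined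
   modulo A(E) ∩ V(D), which lies in V(E); this gives the surjection
   B/V(D) -> A(E)/V(E). *)
From HB Require Import structures.
From mathcomp Require Import all_boot finmap boolp.

Set Implicit Arguments.
Unset Strict Implicit.
Unset Printing Implicit Defensive.

Local Open Scope fset_scope.

Section SymmetricDifference.
Variable G : groupType.
Implicit Types x y z : {fset G}.

Lemma in_addv x y t : (t \in addv x y) = (t \in x) (+) (t \in y).
Proof. by rewrite !inE; case: (t \in x); case: (t \in y). Qed.

Lemma addvA : associative (@addv G).
Proof. by move=> x y z; apply/fsetP=> t; rewrite !in_addv addbA. Qed.

Lemma addvC : commutative (@addv G).
Proof. by move=> x y; apply/fsetP=> t; rewrite !in_addv addbC. Qed.

Lemma add0v : left_id fset0 (@addv G).
Proof. by move=> x; apply/fsetP=> t; rewrite !in_addv inE. Qed.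

Lemma addvv x : addv x x = fset0.
Proof. by apply/fsetP=> t; rewrite !in_addv inE addbb. Qed.

End SymmetricDifference.

HB.instance Definition _ (G : groupType) :=
  Monoid.isComLaw.Build {fset G} fset0 (@addv G) (@addvA G) (@addvC G) (@add0v G).

Lemma addv0 (G : groupType) (x : {fset G}) : addv x fset0 = x.
Proof. exact: Monoid.mulm1. Qed.

Lemma addvKA (G : groupType) (x a b : {fset G}) :
  addv (addv x a) (addv x b) = addv a b.
Proof.
apply/fsetP=> t; rewrite !in_addv.
by case: (t \in x); case: (t \in a); case: (t \in b).
Qed.

Section BigSymdiff.
Variables (R : Type) (idx : R) (op : Monoid.com_law idx) (I : choiceType).
Hypothesis opK : forall r, op r r = idx.

Lemma big_fset_symdiff (x y : {fset I}) (F : I -> R) :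
  \big[op/idx]_(i <- (x `\` y) `|` (y `\` x)) F i =
  op (\big[op/idx]_(i <- x) F i) (\big[op/idx]_(i <- y) F i).
Proof.
rewrite (big_fsetID _ (mem y) x) (big_fsetID _ (mem x) y).
rewrite (big_fsetID _ (mem y) ((x `\` y) `|` (y `\` x))).
set common := \big[op/idx]_(i <- [fset z in x | mem y z]) F i.
have -> : \big[op/idx]_(i <- [fset z in y | mem x z]) F i = common.
  by apply: eq_fbigl => t; rewrite !inE andbC.
have opKA r s u : op (op r s) (op r u) = op s u.
  transitivity (op (op r r) (op s u)); first exact: Monoid.mulmACA.
  by rewrite opK Monoid.mul1m.
rewrite opKA Monoid.mulmC.
congr (op _ _); apply: eq_fbigl => t; rewrite !inE /=.
  by case: (t \in x); case: (t \in y).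
by case: (t \in x); case: (t \in y).
Qed.

End BigSymdiff.

Section Involutions.
Variable G : groupType.
Local Open Scope group_scope.
Implicit Types d e f g : G.

Lemma commbJ d e g : commb (d ^ g) (e ^ g) = commb d e.
Proof. by rewrite /commb -!conjMg (inj_eq (@conjg_inj _ g)). Qed.

Lemma commbC d e : commb d e = commb e d.
Proof. by rewrite /commb eq_sym. Qed.

Lemma conjg_commb d e : commb d e -> e ^ d = e.
Proof. by move=> /eqP de; rewrite conjgE -de mulKg. Qed.

Lemma involution_inv d : involution d -> d^-1 = d.
Proof. by case=> _ dd; apply: mulg1_eq. Qed.

(* Noncommuting involutions generate S_3: (ef)^3 = 1 is exactly efe = fef. *)
Lemma involution_conjC e f : involution e -> involution f ->
  order_le3 (e * f) -> ~~ commb e f -> e ^ f = f ^ e.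
Proof.
move=> ie if_ ord_ef; have ei := involution_inv ie; have fi := involution_inv if_.
case: ord_ef => [|[]] ef1.
- rewrite expg1 in ef1; have <- : e^-1 = f by apply: mulg1_eq.
  by rewrite ei /commb eqxx.
- rewrite expgS expg1 in ef1; have := mulg1_eq ef1.
  by rewrite invgM ei fi /commb => ->; rewrite eqxx.
- have efe : (e * (f * e)) * (f * (e * f)) = 1.
    by rewrite -ef1 !expgS expg0 mulg1 !mulgA.
  have := mulg1_eq efe; rewrite !invgM ei fi !conjgE ei fi => <- _.
  by rewrite mulgA.
Qed.

End Involutions.

Section Bilinearity.
Variable G : groupType.
Implicit Types x y z w : {fset G}.

Lemma formvC x y : formv x y = formv y x.
Proof.
rewrite /formv exchange_big; apply: eq_bigr => d _; apply: eq_bigr => e _.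
by rewrite commbC.
Qed.

Lemma formvDl x y z : formv (addv x y) z = formv x z (+) formv y z.
Proof. by rewrite /formv /addv big_fset_symdiff //; exact: addbb. Qed.

Lemma formvDr x y z : formv z (addv x y) = formv z x (+) formv z y.
Proof. by rewrite !(formvC z) formvDl. Qed.

Lemma formv0 z : formv fset0 z = false.
Proof. by rewrite /formv big_seq_fset0. Qed.

Lemma formv_set1 (d e : G) : formv [fset d] [fset e] = ~~ commb d e.
Proof. by rewrite /formv !big_seq_fset1. Qed.

Lemma formv_suml (r : seq G) (F : G -> {fset G}) z :
  formv (\big[@addv G/fset0]_(i <- r) F i) z =
  \big[addb/false]_(i <- r) formv (F i) z.
Proof. by apply: (big_morph (fun u => formv u z)) => [u w|]; rewrite ?formvDl ?formv0. Qed.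

Lemma formv_sumr (r : seq G) (F : G -> {fset G}) z :
  formv z (\big[@addv G/fset0]_(i <- r) F i) =
  \big[addb/false]_(i <- r) formv z (F i).
Proof. by rewrite formvC formv_suml; apply: eq_bigr => i _; exact: formvC. Qed.

Lemma formv_expandl x w : formv x w = \big[addb/false]_(d <- x) formv [fset d] w.
Proof. by apply: eq_bigr => d _; rewrite /formv big_seq_fset1. Qed.

Lemma formv_expandr x w : formv w x = \big[addb/false]_(d <- x) formv w [fset d].
Proof. by rewrite formvC formv_expandl; apply: eq_bigr => d _; rewrite formvC. Qed.

Lemma mulvDl x y z : mulv (addv x y) z = addv (mulv x z) (mulv y z).
Proof. by rewrite /mulv {1}/addv big_fset_symdiff //; exact: addvv. Qed.

Lemma mulvDr x y z : mulv z (addv x y) = addv (mulv z x) (mulv z y).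
Proof.
rewrite /mulv -big_split /=; apply: eq_bigr => d _.
by rewrite {1}/addv big_fset_symdiff //; exact: addvv.
Qed.

End Bilinearity.

Section Support.
Variables (G : groupType) (S : pred G).
Implicit Types x y : {fset G}.

Lemma supported0 : supported S fset0.
Proof. by move=> t; rewrite inE. Qed.

Lemma supported1 (d : G) : S d -> supported S [fset d].
Proof. by move=> Sd t; rewrite inE => /eqP ->. Qed.

Lemma supported_addv x y :
  supported S x -> supported S y -> supported S (addv x y).
Proof.
move=> Sx Sy t; rewrite in_addv.
by case tx: (t \in x); case ty: (t \in y) => //= _; [apply: Sx | apply: Sy].
Qed.

Lemma supported_mulv x y : (forall d e, S d -> S e -> S (d ^ e)%g) ->
  supported S x -> supported S y -> supported S (mulv x y).
Proof.
move=> SJ Sx Sy; rewrite /mulv big_seq.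
apply: (big_ind (supported S)) => [|u w|d xd]; [exact: supported0|exact: supported_addv|].
rewrite big_seq.
apply: (big_ind (supported S)) => [|u w|e ye]; [exact: supported0|exact: supported_addv|].
rewrite /mul1; case: commb; first exact: supported0.
have Sd := Sx _ xd; have Se := Sy _ ye.
by do 2?apply: supported_addv; apply: supported1 => //; apply: SJ.
Qed.

Lemma radical0 : radical S fset0.
Proof. by split=> [|z _]; [exact: supported0 | exact: formv0]. Qed.

Lemma radical_addv x y : radical S x -> radical S y -> radical S (addv x y).
Proof.
case=> Sx rx [Sy ry]; split; first exact: supported_addv.
by move=> z Sz; rewrite formvDl rx ?ry.
Qed.

Lemma radical_subset (T : pred G) x :
  {subset S <= T} -> radical T x -> supported S x -> radical S x.
Proof. by move=> ST [_ rx] Sx; split=> // y Sy; apply: rx => t /Sy /ST. Qed.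

End Support.

Section Associativity.
Variables (G : groupType) (D : pred G).
Hypothesis hinv : forall d, D d -> involution d.
Hypothesis hord : forall d e, D d -> D e -> order_le3 (d * e)%g.
Hypothesis hDJ : forall d e, D d -> D e -> D (d ^ e)%g.
Implicit Types x y z a b : {fset G}.

Lemma formv_mul1A (d e f : G) : D e -> D f ->
  formv (mul1 d e) [fset f] = formv [fset d] (mul1 e f).
Proof.
move=> De Df; have [_ ee] := hinv De; rewrite /mul1.
case cde: (commb d e); case cef: (commb e f);
  rewrite ?formv0 ?(formvC [fset d] fset0) ?formv0 //
          ?formvDl ?formvDr ?formv_set1 ?cde ?cef //=.
- rewrite (involution_conjC (hinv De) (hinv Df) (hord De Df)) ?cef //.
  have de : (d ^ e)%g = d by apply: conjg_commb; rewrite commbC.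
  by rewrite -[X in commb X (f ^ e)%g]de commbJ; case: commb.
- have fe : (f ^ e)%g = f by apply: conjg_commb.
  by rewrite -[X in commb (d ^ e) X]fe commbJ; case: commb.
- rewrite (involution_conjC (hinv De) (hinv Df) (hord De Df)) ?cef //.
  have fee : ((f ^ e) ^ e)%g = f by rewrite -conjgM ee conjg1.
  by rewrite -[X in commb (d ^ e) X]fee commbJ; case: commb; case: commb.
Qed.

Lemma formv_mulvA x y z : supported D y -> supported D z ->
  formv (mulv x y) z = formv x (mulv y z).
Proof.
move=> Dy Dz; rewrite /mulv formv_suml formv_expandl; apply: eq_bigr => d _.
rewrite formv_suml formv_sumr; apply: eq_big_seq => e ye.
rewrite formv_expandr formv_sumr; apply: eq_big_seq => f zf.
exact: formv_mul1A (Dy _ ye) (Dz _ zf).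
Qed.

Lemma radical_mulvl x y : radical D x -> supported D y -> radical D (mulv x y).
Proof.
case=> Dx rx Dy; split=> [|z Dz]; first exact: supported_mulv.
by rewrite formv_mulvA // rx //; apply: supported_mulv.
Qed.

Lemma radical_mulvr x y : supported D x -> radical D y -> radical D (mulv x y).
Proof.
move=> Dx [Dy ry]; split=> [|z Dz]; first exact: supported_mulv.
by rewrite formvC -formv_mulvA // formvC ry //; apply: supported_mulv.
Qed.

Lemma radical_mulv_congr x y a b : supported D y -> supported D a ->
  radical D (addv x a) -> radical D (addv y b) ->
  radical D (addv (mulv x y) (mulv a b)).
Proof.
move=> Dy Da rxa ryb.
have -> : addv (mulv x y) (mulv a b) = addv (mulv (addv x a) y) (mulv a (addv y b)).
  by rewrite mulvDl mulvDr -addvA [addv (mulv a y) _]addvA addvv add0v.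
by apply: radical_addv; [apply: radical_mulvl | apply: radical_mulvr].
Qed.

End Associativity.

Section Representatives.
Variables (G : groupType) (D E : pred G).
Hypothesis hinv : forall d, D d -> involution d.
Hypothesis hord : forall d e, D d -> D e -> order_le3 (d * e)%g.
Hypothesis hDJ : forall d e, D d -> D e -> D (d ^ e)%g.
Hypothesis hED : {subset E <= D}.
Hypothesis hEJ : forall d e, E d -> E e -> E (d ^ e)%g.
Implicit Types x y z a b : {fset G}.

Definition rad_rep x a := supported E a /\ radical D (addv x a).

Lemma supported_subset a : supported E a -> supported D a.
Proof. by move=> Ea t /Ea /hED. Qed.

Lemma rad_rep_supported x a : rad_rep x a -> supported D x.
Proof.
case=> Ea [Dxa _]; rewrite -[x]addv0 -(addvv a) addvA.
by apply: supported_addv => //; apply: supported_subset.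
Qed.

Lemma rad_rep_refl a : supported E a -> rad_rep a a.
Proof. by split; rewrite ?addvv //; apply: radical0. Qed.

Lemma rad_rep_radical x : radical D x -> rad_rep x fset0.
Proof. by split; rewrite ?addv0 //; apply: supported0. Qed.

Lemma rad_rep_addv x y a b :
  rad_rep x a -> rad_rep y b -> rad_rep (addv x y) (addv a b).
Proof.
move=> [Ea rxa] [Eb ryb]; split; first exact: supported_addv.
by rewrite Monoid.mulmACA; apply: radical_addv.
Qed.

Lemma rad_rep_mulv x y a b :
  rad_rep x a -> rad_rep y b -> rad_rep (mulv x y) (mulv a b).
Proof.
move=> [Ea rxa] [Eb ryb]; split; first exact: supported_mulv.
apply: radical_mulv_congr => //; last exact: supported_subset.
exact: rad_rep_supported (conj Eb ryb).
Qed.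

Lemma rad_rep_unique x a b : rad_rep x a -> rad_rep x b -> radical E (addv a b).
Proof.
move=> [Ea rxa] [Eb rxb]; apply: radical_subset hED _ _.
  by rewrite -(addvKA x); apply: radical_addv.
exact: supported_addv.
Qed.

End Representatives.

Lemma conj_class_conjg_closed (G : groupType) (D : pred G) :
  is_conj_class D -> forall d e, D d -> D e -> D (d ^ e)%g.
Proof. by case=> d0 Dd0 d e /Dd0 [g ->] _; apply/Dd0; exists (g * e)%g; rewrite conjgM. Qed.

Theorem lemma2p8 (G : groupType) (D E : pred G)
  (hinv : forall d, D d -> involution d)
  (hcc : is_conj_class D)
  (hgen : generates D)
  (hord : forall d e, D d -> D e -> order_le3 (d * e)%g)
  (hE : fischer_subspace D E) :
  subalg_with_quotient_iso D E.
Proof.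
have hDJ := conj_class_conjg_closed hcc; case: hE => hED hEJ.
have rep_mulv := rad_rep_mulv hinv hord hDJ hED hEJ.
have rep_unique := rad_rep_unique hED.
pose rep := rad_rep D E; pose B x := exists a, rep x a.
have [phi phiP] : {phi : {fset G} -> {fset G} & forall x, B x -> rep x (phi x)}.
  apply: (choice (P := fun x a => B x -> rep x a)) => x.
  by case: (pselect (B x)) => [[a xa] | nB]; [exists a | exists fset0].
have B_addv x y : B x -> B y -> B (addv x y).
  by move=> [a xa] [b yb]; exists (addv a b); apply: rad_rep_addv.
have B_mulv x y : B x -> B y -> B (mulv x y).
  by move=> [a xa] [b yb]; exists (mulv a b); apply: rep_mulv.
exists (fun x => `[< B x >]); split; first split.
- by move=> x /asboolP [a /(rad_rep_supported hED)].
- by move=> x /(rad_rep_radical E) xa; apply/asboolP; exists fset0.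
- by move=> x y /asboolP Bx /asboolP By; apply/asboolP; apply: B_addv.
- by move=> x y /asboolP Bx /asboolP By; apply/asboolP; apply: B_mulv.
exists phi; split.
- by move=> x /asboolP /phiP [].
- move=> x y /asboolP Bx /asboolP By.
  by apply: rep_unique (phiP _ (B_addv _ _ Bx By)) _; apply: rad_rep_addv; apply: phiP.
- move=> x y /asboolP Bx /asboolP By.
  by apply: rep_unique (phiP _ (B_mulv _ _ Bx By)) _; apply: rep_mulv; apply: phiP.
- move=> x /(rad_rep_radical E) x0; rewrite -[phi x]addv0.
  exact: rep_unique (phiP x (ex_intro _ fset0 x0)) x0.
- move=> z Ez; have zz := rad_rep_refl D Ez.
  exists z; first by apply/asboolP; exists z.
  exact: rep_unique (phiP z (ex_intro _ z zz)) zz.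
Qed.
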